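(* Let $n\ge2$ and $\mathsf u\in\mathcal S_n$. Then $\mathsf r^{\mathsf u}$ is a tree-like factorization of $\lambda_n$.
   Context: $\widetilde S_n$ is the group, under composition $(vw)(k)=v(w(k))$, of bijections $w:\mathbb Z\to\mathbb Z$ with $w(i+n)=w(i)+n$ and $\sum_{i=1}^n w(i)=\binom{n+1}2$. For $i\not\equiv j\pmod n$, $(\!(i,j)\!)$ swaps $i+kn$ and $j+kn$ for all $k$; $(\!(i,j)\!)=(\!(j,i)\!)=(\!(i+kn,j+kn)\!)$; $s_i=(\!(i,i+1)\!)$, $i\in\{0,\dots,n-1\}$. $\lambda_n(k)=k+n$ for $k\not\equiv0\pmod n$, $\lambda_n(k)=k-n(n-1)$ for $k\equiv0\pmod n$; its reflection length is $2n-2$, and $\textsc{fact}(\lambda_n)$ is the set of sequences of $2n-2$ reflections with product $\lambda_n$. A sequence $[r_1,\dots,r_{2n-2}]\in\textsc{fact}(\lambda_n)$ is tree-like if one can write $r_k=(\!(a_{k-1},b_k)\!)$ with integers $a_{k-1}<b_k$ ($1\le k\le 2n-2$) and $a_k\equiv b_k\pmod n$ ($1\le k\le 2n-3$). $\bm\lambda_n$ is the word $[s_0,\dots,s_{n-1}]$ repeated $n-1$ times with $j$-th letter $\sigma_j=s_{(j-1)\bmod n}$. A subword is $\mathsf u=[u_1,\dots,u_{n(n-1)}]$ with $u_j\in\{\sigma_j,e\}$; $j$ is a skip if $u_j=e$. $u_{(j)}=u_1\cdots u_j$, $u_{(0)}=e$. $\mathcal S_n$ is the set of subwords with exactly $2n-2$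 skips and product $e$. $\textsc{inv}(\mathsf u)=[t_1,\dots,t_{n(n-1)}]$, $t_j=u_{(j-1)}\sigma_ju_{(j-1)}^{-1}$, and $\mathsf r^{\mathsf u}$ is the subsequence of the $t_j$ at skips $j$, in increasing order. *)

From Stdlib Require Import ZArith List Lia.
Import ListNotations.
Open Scope Z_scope.

(* Elements of the affine symmetric group are represented as functions Z -> Z;
   composition (v w)(k) = v (w k). *)
Definition comp (v w : Z -> Z) : Z -> Z := fun k => v (w k).

Definition prod (l : list (Z -> Z)) : Z -> Z := fold_right comp (fun k => k) l.

(* The reflection ((i,j)) in \tilde S_n (meaningful when i, j differ mod n):
   swaps i + kn and j + kn for all k, fixes every other integer. *)
Definition refl (n : nat) (i j : Z) : Z -> Z := fun k =>
  if Z.eqb (k mod Z.of_nat n) (i mod Z.of_nat n) then k + (j - i)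
  else if Z.eqb (k mod Z.of_nat n) (j mod Z.of_nat n) then k + (i - j)
  else k.

Definition is_reflection (n : nat) (r : Z -> Z) : Prop :=
  exists i j : Z, i mod Z.of_nat n <> j mod Z.of_nat n /\
    forall k, r k = refl n i j k.

Definition s (n : nat) (i : Z) : Z -> Z := refl n i (i + 1).

Definition lambda (n : nat) : Z -> Z := fun k =>
  if Z.eqb (k mod Z.of_nat n) 0 then k - Z.of_nat n * (Z.of_nat n - 1)
  else k + Z.of_nat n.

Definition in_fact (n : nat) (l : list (Z -> Z)) : Prop :=
  length l = (2 * n - 2)%nat /\ Forall (is_reflection n) l /\
  forall k, prod l k = lambda n k.

(* tree-like: r_k = ((a_{k-1}, b_k)) with a_{k-1} < b_k (1 <= k <= 2n-2)
   and a_k = b_k mod n (1 <= k <= 2n-3).  Writing ((a,b)) presupposes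
   a <> b mod n. Entry r_k is nth (k-1) l. *)
Definition tree_like (n : nat) (l : list (Z -> Z)) : Prop :=
  in_fact n l /\
  exists a b : nat -> Z,
    (forall k : nat, (1 <= k <= 2 * n - 2)%nat ->
       a (k - 1)%nat < b k /\
       a (k - 1)%nat mod Z.of_nat n <> b k mod Z.of_nat n /\
       forall x, nth (k - 1) l (fun y => y) x = refl n (a (k - 1)%nat) (b k) x) /\
    (forall k : nat, (1 <= k <= 2 * n - 3)%nat ->
       a k mod Z.of_nat n = b k mod Z.of_nat n).

(* The word bold-lambda_n: j-th letter sigma_j = s_{(j-1) mod n}, 1 <= j <= n(n-1). *)
Definition sigma (n j : nat) : Z -> Z := s n (Z.of_nat ((j - 1) mod n)).

(* A subword is encoded by its skip pattern sk : list bool of length n(n-1):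
   nth (j-1) sk false = true  iff  j is a skip (u_j = e). *)
Definition is_skip (sk : list bool) (j : nat) : bool := nth (j - 1) sk false.

Definition letter (n : nat) (sk : list bool) (j : nat) : Z -> Z :=
  if is_skip sk j then (fun k => k) else sigma n j.

Definition prefix (n : nat) (sk : list bool) (j : nat) : Z -> Z :=
  prod (map (letter n sk) (seq 1 j)).

(* u_(j)^{-1} = u_j ... u_1 (each u_i is e or an involution s_i) *)
Definition prefix_inv (n : nat) (sk : list bool) (j : nat) : Z -> Z :=
  prod (map (letter n sk) (rev (seq 1 j))).

Definition in_Sn (n : nat) (sk : list bool) : Prop :=
  length sk = (n * (n - 1))%nat /\
  length (filter (fun b => b) sk) = (2 * n - 2)%nat /\
  forall k, prefix n sk (n * (n - 1)) k = k.

Definition t (n : nat) (sk : list bool) (j : nat) : Z -> Z :=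
  comp (prefix n sk (j - 1)) (comp (sigma n j) (prefix_inv n sk (j - 1))).

Definition r_u (n : nat) (sk : list bool) : list (Z -> Z) :=
  map (t n sk) (filter (is_skip sk) (seq 1 (n * (n - 1)))).

(* The letter sigma_(r+1) = s_r exchanges the residues r and r+1, so u_(r+1) agrees with u_(r)
   on the positions r+2, ..., r+n-1, while on the window r+1, ..., r+n the values u_(r)(r) and
   u_(r)(r+1) take the front and the back place (the latter shifted by n), in an order decided by
   whether r+1 is a skip.  Conjugating by u_(r), the reflection of a skip r+1 is
   ((c_r, c_(r+1))) for the carrier c_r = u_(r)(r), which only changes at skips; hence r^u has the
   tree-like shape with a_k = b_k, and reinserting the skipped letters shows that its product is
   the product lambda_n of the whole word.

   It remains to see c_r < c_(r+1) at every skip.  Apart from the carrier, the window has n-1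
   slots used in turn: slot k meets the letters k + t(n-1) + 1 (t < n), and the value it holds
   gains n each time unless that letter is a skip, when it swaps with the carrier.  As
   u_(n(n-1)) = e, every slot value must come back home, which needs at least two skips per slot,
   so there are exactly two.  At the first skip of a slot the new carrier is k+1+tn, at the last
   the old carrier is k+1+(t-1)n.  The other carrier is controlled by the monotone weight
   w(v) = (v mod n) + (n-1)(v div n): the level X - w(u_(r)(X)) of a window position is 0 at the
   start and n-1 at the end, never decreases along the trajectory of a value and increases at
   the front, so every carrier before the end has level between 0 and n-2. *)

From Pilot Require Import Defs.
From Stdlib Require Import ZArith List Lia.
Import ListNotations.

Local Open Scope Z_scope.

Lemma mod_add_small_neq (p a d : Z) : 0 < d < p -> (a + d) mod p <> a mod p.
Proof.
  intros Hd E.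
  assert (Hd0 : d mod p = 0).
  { replace d with (a + d - a) by lia. now rewrite Zminus_mod, E, Z.sub_diag. }
  rewrite Z.mod_small in Hd0 by lia. lia.
Qed.

Lemma mod_eq_exists (p a b : Z) : 0 < p -> a mod p = b mod p -> exists q, a = b + q * p.
Proof.
  intros Hp E. exists ((a - b) / p).
  assert (Hab : (a - b) mod p = 0) by now rewrite Zminus_mod, E, Z.sub_diag.
  pose proof (Z.div_mod (a - b) p ltac:(lia)). lia.
Qed.

Section ListSums.

Local Open Scope nat_scope.

Lemma length_filter_as_sum {A : Type} (f : A -> bool) (l : list A) :
  length (filter f l) = list_sum (map (fun x => if f x then 1 else 0) l).
Proof. induction l as [|a l IH]; simpl; [reflexivity|]. destruct (f a); simpl; lia. Qed.

Lemma list_sum_map_add {A : Type} (g h : A -> nat) (l : list A) :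
  list_sum (map (fun x => g x + h x) l) = list_sum (map g l) + list_sum (map h l).
Proof. induction l as [|a l IH]; simpl; lia. Qed.

Lemma list_sum_exchange {A B : Type} (h : A -> B -> nat) (l1 : list A) (l2 : list B) :
  list_sum (map (fun a => list_sum (map (h a) l2)) l1) =
  list_sum (map (fun b => list_sum (map (fun a => h a b) l1)) l2).
Proof.
  induction l1 as [|a l1 IH]; simpl.
  - induction l2; simpl; lia.
  - now rewrite IH, <- list_sum_map_add.
Qed.

Lemma map_seq_shift (g : nat -> nat) (a b len : nat) :
  map (fun k => g (k + a)) (seq b len) = map g (seq (b + a) len).
Proof.
  revert b. induction len as [|len IH]; intros b; simpl; [reflexivity|].
  f_equal. apply (IH (S b)).
Qed.

Lemma list_sum_seq_blocks (g : nat -> nat) (c m : nat) :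
  list_sum (map g (seq 0 (c * m))) =
  list_sum (map (fun t => list_sum (map (fun k => g (k + t * m)) (seq 0 m))) (seq 0 c)).
Proof.
  induction c as [|c IH]; [reflexivity|].
  rewrite Nat.mul_succ_l, seq_app, map_app, list_sum_app, IH.
  rewrite seq_S, map_app, list_sum_app, <- (map_seq_shift g (c * m) 0 m). simpl. lia.
Qed.

Lemma list_sum_lower_bound {A : Type} (g : A -> nat) (l : list A) (m : nat) :
  (forall x, In x l -> m <= g x) -> m * length l <= list_sum (map g l).
Proof.
  induction l as [|a l IH]; intros Hm; simpl; [lia|].
  specialize (Hm a (or_introl eq_refl)) as Ha.
  assert (m * length l <= list_sum (map g l)) by (apply IH; intros; apply Hm; now right).
  lia.
Qed.

Lemma list_sum_tight {A : Type} (g : A -> nat) (l : list A) (m : nat) :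
  (forall x, In x l -> m <= g x) -> list_sum (map g l) <= m * length l ->
  forall x, In x l -> g x = m.
Proof.
  induction l as [|a l IH]; intros Hm Hsum x Hx; simpl in *; [tauto|].
  pose proof (Hm a (or_introl eq_refl)) as Ha.
  pose proof (list_sum_lower_bound g l m ltac:(intros; apply Hm; now right)).
  destruct Hx as [<-|Hx]; [lia|].
  apply IH; [intros; apply Hm; now right|lia|exact Hx].
Qed.

End ListSums.

Section FilterSeq.

Local Open Scope nat_scope.
Variable f : nat -> bool.

Lemma filter_seq_head (a len : nat) :
  0 < length (filter f (seq a len)) ->
  a <= nth 0 (filter f (seq a len)) 0 /\
  forall x, a <= x < nth 0 (filter f (seq a len)) 0 -> f x = false.
Proof.
  revert a. induction len as [|len IH]; intros a Hlen; simpl in *; [lia|].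
  destruct (f a) eqn:Ha; simpl in *; [split; [lia|intros; lia]|].
  destruct (IH (S a) Hlen) as [Hle Hgap]. split; [lia|].
  intros x Hx. destruct (Nat.eq_dec x a) as [->|]; [exact Ha|]. apply Hgap. lia.
Qed.

Lemma filter_seq_consecutive (a len i : nat) :
  S i < length (filter f (seq a len)) ->
  nth i (filter f (seq a len)) 0 < nth (S i) (filter f (seq a len)) 0 /\
  forall x, nth i (filter f (seq a len)) 0 < x < nth (S i) (filter f (seq a len)) 0 ->
    f x = false.
Proof.
  revert a i. induction len as [|len IH]; intros a i Hlen; simpl in *; [lia|].
  destruct (f a) eqn:Ha; simpl in *; [|now apply IH].
  destruct i as [|i]; [|now apply IH; lia].
  destruct (filter_seq_head (S a) len ltac:(lia)) as [Hle Hgap].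
  split; [lia|]. intros x Hx. apply Hgap. lia.
Qed.

End FilterSeq.

Lemma skip_count (sk : list bool) :
  length (filter (is_skip sk) (seq 1 (length sk))) = length (filter (fun b => b) sk).
Proof.
  assert (Hmap : map (is_skip sk) (seq 1 (length sk)) = sk).
  { apply (nth_ext _ _ (is_skip sk 0) false); [now rewrite length_map, length_seq|].
    intros i Hi. rewrite length_map, length_seq in Hi.
    rewrite map_nth, seq_nth by exact Hi. unfold is_skip. simpl. now rewrite Nat.sub_0_r. }
  rewrite <- Hmap at 3. now rewrite filter_map_swap, length_map.
Qed.

Lemma is_skip_nil (j : nat) : is_skip [] j = false.
Proof. unfold is_skip. now destruct (j - 1)%nat. Qed.

Section Reflections.

Variable n : nat.
Hypothesis n_ge2 : (2 <= n)%nat.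
Local Notation p := (Z.of_nat n).

Definition periodic (u : Z -> Z) : Prop := forall X q, u (X + q * p) = u X + q * p.

Lemma periodic_mod_eq (u : Z -> Z) (a b : Z) :
  periodic u -> a mod p = b mod p -> u a mod p = u b mod p.
Proof.
  intros Hu E. destruct (mod_eq_exists p a b ltac:(lia) E) as [q ->].
  now rewrite Hu, Z.mod_add by lia.
Qed.

Lemma periodic_inverse (u v : Z -> Z) :
  periodic u -> (forall X, u (v X) = X) -> (forall X, v (u X) = X) -> periodic v.
Proof.
  intros Hu Huv Hvu X q. rewrite <- (Huv X) at 1. now rewrite <- Hu, Hvu.
Qed.

Lemma refl_periodic (i j : Z) : periodic (refl n i j).
Proof.
  intros X q. unfold refl. rewrite Z.mod_add by lia.
  destruct (_ =? _); [lia|]. destruct (_ =? _); lia.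
Qed.

Lemma refl_shift (i j q X : Z) : refl n (i + q * p) (j + q * p) X = refl n i j X.
Proof.
  unfold refl. rewrite !Z.mod_add by lia.
  now replace (j + q * p - (i + q * p)) with (j - i) by lia;
  replace (i + q * p - (j + q * p)) with (i - j) by lia.
Qed.

Lemma refl_involutive (i j X : Z) :
  i mod p <> j mod p -> refl n i j (refl n i j X) = X.
Proof.
  intros Hij.
  assert (Hshift : forall a b c, a mod p = b mod p -> (a + c) mod p = (b + c) mod p).
  { intros a b c E. now rewrite Zplus_mod, E, <- Zplus_mod. }
  unfold refl at 2.
  destruct (Z.eqb_spec (X mod p) (i mod p)) as [Ei|Ei];
    [|destruct (Z.eqb_spec (X mod p) (j mod p)) as [Ej|Ej]]; unfold refl.
  - rewrite (Hshift X i) by exact Ei. replace (i + (j - i)) with j by lia.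
    destruct (Z.eqb_spec (j mod p) (i mod p)); [congruence|]. rewrite Z.eqb_refl. lia.
  - rewrite (Hshift X j) by exact Ej. replace (j + (i - j)) with i by lia.
    rewrite Z.eqb_refl. lia.
  - now rewrite (proj2 (Z.eqb_neq _ _) Ei), (proj2 (Z.eqb_neq _ _) Ej).
Qed.

Lemma periodic_refl_comm (u v : Z -> Z) (i j y : Z) :
  periodic u -> periodic v -> (forall X, v (u X) = X) ->
  u (refl n i j y) = refl n (u i) (u j) (u y).
Proof.
  intros Hu Hv Hvu.
  assert (Htest : forall a b, (u a mod p =? u b mod p) = (a mod p =? b mod p)).
  { intros a b. apply Bool.eq_iff_eq_true. rewrite !Z.eqb_eq. split.
    - intros E. rewrite <- (Hvu a), <- (Hvu b). now apply periodic_mod_eq.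
    - now apply periodic_mod_eq. }
  unfold refl. rewrite !Htest.
  destruct (Z.eqb_spec (y mod p) (i mod p)) as [Ei|Ei];
    [|destruct (Z.eqb_spec (y mod p) (j mod p)) as [Ej|Ej]]; try reflexivity.
  - destruct (mod_eq_exists p y i ltac:(lia) Ei) as [q ->].
    replace (i + q * p + (j - i)) with (j + q * p) by lia. rewrite !Hu. lia.
  - destruct (mod_eq_exists p y j ltac:(lia) Ej) as [q ->].
    replace (j + q * p + (i - j)) with (i + q * p) by lia. rewrite !Hu. lia.
Qed.

Lemma mod_neq_succ (i : Z) : i mod p <> (i + 1) mod p.
Proof. intros E. symmetry in E. revert E. apply mod_add_small_neq. lia. Qed.

Lemma sigma_succ (r : nat) (X : Z) : sigma n (S r) X = s n (Z.of_nat r) X.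
Proof.
  unfold sigma, s. rewrite Nat.sub_succ, Nat.sub_0_r.
  pose proof (Nat.div_mod_eq r n) as Er.
  rewrite <- (refl_shift _ _ (Z.of_nat (r / n))). f_equal; lia.
Qed.

Lemma letter_periodic (sk : list bool) (j : nat) : periodic (letter n sk j).
Proof.
  intros X q. unfold letter. destruct (is_skip sk j); [reflexivity|]. apply refl_periodic.
Qed.

Lemma letter_involutive (sk : list bool) (j : nat) (X : Z) :
  letter n sk j (letter n sk j X) = X.
Proof.
  unfold letter. destruct (is_skip sk j); [reflexivity|].
  apply refl_involutive, mod_neq_succ.
Qed.

End Reflections.

Section Prefixes.

Variable n : nat.
Hypothesis n_ge2 : (2 <= n)%nat.
Local Notation p := (Z.of_nat n).
Variable sk : list bool.

Lemma prod_app (l1 l2 : list (Z -> Z)) (X : Z) :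
  prod (l1 ++ l2) X = prod l1 (prod l2 X).
Proof. induction l1 as [|f l IH]; simpl; [reflexivity|]. unfold comp. now rewrite IH. Qed.

Lemma prefix_succ (r : nat) (X : Z) :
  prefix n sk (S r) X = prefix n sk r (letter n sk (S r) X).
Proof. unfold prefix. now rewrite seq_S, map_app, prod_app. Qed.

Lemma prefix_inv_succ (r : nat) (X : Z) :
  prefix_inv n sk (S r) X = letter n sk (S r) (prefix_inv n sk r X).
Proof. unfold prefix_inv. now rewrite seq_S, rev_app_distr. Qed.

Lemma prefix_cancel (r : nat) (X : Z) : prefix n sk r (prefix_inv n sk r X) = X.
Proof.
  revert X. induction r as [|r IH]; intros X; [reflexivity|].
  now rewrite prefix_succ, prefix_inv_succ, letter_involutive.
Qed.

Lemma prefix_inv_cancel (r : nat) (X : Z) : prefix_inv n sk r (prefix n sk r X) = X.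
Proof.
  revert X. induction r as [|r IH]; intros X; [reflexivity|].
  now rewrite prefix_succ, prefix_inv_succ, IH, letter_involutive.
Qed.

Lemma prefix_periodic (r : nat) : periodic n (prefix n sk r).
Proof.
  induction r as [|r IH]; intros X q; [reflexivity|].
  now rewrite !prefix_succ, letter_periodic, IH.
Qed.

Lemma prefix_inv_periodic (r : nat) : periodic n (prefix_inv n sk r).
Proof.
  apply (periodic_inverse n (prefix n sk r));
    [apply prefix_periodic|apply prefix_cancel|apply prefix_inv_cancel].
Qed.

Lemma prefix_mod_eq_iff (r : nat) (a b : Z) :
  prefix n sk r a mod p = prefix n sk r b mod p <-> a mod p = b mod p.
Proof.
  split; intros E.
  - rewrite <- (prefix_inv_cancel r a), <- (prefix_inv_cancel r b).
    exact (periodic_mod_eq n n_ge2 _ _ _ (prefix_inv_periodic r) E).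
  - exact (periodic_mod_eq n n_ge2 _ _ _ (prefix_periodic r) E).
Qed.

Lemma t_succ (r : nat) (X : Z) :
  t n sk (S r) X =
  refl n (prefix n sk r (Z.of_nat r)) (prefix n sk r (Z.of_nat r + 1)) X.
Proof.
  unfold t, comp. rewrite Nat.sub_succ, Nat.sub_0_r, sigma_succ by exact n_ge2.
  rewrite <- (prefix_cancel r X) at 2. unfold s.
  apply (periodic_refl_comm n n_ge2 _ (prefix_inv n sk r));
    [apply prefix_periodic|apply prefix_inv_periodic|apply prefix_inv_cancel].
Qed.

End Prefixes.

Section Window.

Variable n : nat.
Hypothesis n_ge2 : (2 <= n)%nat.
Local Notation p := (Z.of_nat n).
Variable sk : list bool.
Local Notation prefix := (prefix n sk).

Lemma prefix_succ_eval (r : nat) (X : Z) :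
  prefix (S r) X =
  prefix r (if is_skip sk (S r) then X else refl n (Z.of_nat r) (Z.of_nat r + 1) X).
Proof.
  rewrite prefix_succ. unfold letter.
  destruct (is_skip sk (S r)); [reflexivity|]. now rewrite sigma_succ.
Qed.

Lemma prefix_front (r : nat) :
  prefix (S r) (Z.of_nat r + 1) =
  prefix r (if is_skip sk (S r) then Z.of_nat r + 1 else Z.of_nat r).
Proof.
  rewrite prefix_succ_eval. destruct (is_skip sk (S r)); [reflexivity|].
  unfold refl. rewrite (proj2 (Z.eqb_neq _ _)) by (apply not_eq_sym, mod_neq_succ; exact n_ge2).
  rewrite Z.eqb_refl. f_equal. lia.
Qed.

Lemma prefix_back (r : nat) :
  prefix (S r) (Z.of_nat r + p) =
  prefix r (if is_skip sk (S r) then Z.of_nat r else Z.of_nat r + 1) + p.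
Proof.
  replace (Z.of_nat r + p) with (Z.of_nat r + 1 * p) by lia.
  rewrite prefix_succ_eval. destruct (is_skip sk (S r)).
  - rewrite (prefix_periodic n n_ge2 sk r). lia.
  - rewrite refl_periodic by exact n_ge2. unfold refl. rewrite Z.eqb_refl.
    replace (Z.of_nat r + (Z.of_nat r + 1 - Z.of_nat r)) with (Z.of_nat r + 1) by lia.
    rewrite (prefix_periodic n n_ge2 sk r). lia.
Qed.

Lemma prefix_middle (r : nat) (X : Z) :
  Z.of_nat r + 2 <= X <= Z.of_nat r + p - 1 -> prefix (S r) X = prefix r X.
Proof.
  intros HX. rewrite prefix_succ_eval. destruct (is_skip sk (S r)); [reflexivity|].
  unfold refl.
  rewrite (proj2 (Z.eqb_neq _ _)), (proj2 (Z.eqb_neq _ _)); [reflexivity| |].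
  - replace X with (Z.of_nat r + 1 + (X - Z.of_nat r - 1)) by lia.
    apply mod_add_small_neq. lia.
  - replace X with (Z.of_nat r + (X - Z.of_nat r)) by lia.
    apply mod_add_small_neq. lia.
Qed.

Lemma prefix_stable (r d : nat) (X : Z) :
  Z.of_nat (r + d) + 1 <= X <= Z.of_nat r + p - 1 -> prefix (r + d) X = prefix r X.
Proof.
  induction d as [|d IH]; intros HX.
  - now rewrite Nat.add_0_r.
  - rewrite Nat.add_succ_r, prefix_middle by lia. apply IH. lia.
Qed.

End Window.

Lemma slot_decomposition (n r : nat) :
  (2 <= n)%nat -> (r < n * (n - 1))%nat ->
  exists k t, (k < n - 1)%nat /\ (t < n)%nat /\ r = (k + t * (n - 1))%nat.
Proof.
  intros Hn Hr. exists (r mod (n - 1))%nat, (r / (n - 1))%nat. split; [|split].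
  - apply Nat.mod_upper_bound. lia.
  - apply Nat.Div0.div_lt_upper_bound. lia.
  - pose proof (Nat.div_mod_eq r (n - 1)). lia.
Qed.

Definition slot_skips (n : nat) (sk : list bool) (k : nat) : list nat :=
  filter (fun t => is_skip sk (S (k + t * (n - 1)))) (seq 0 n).

Lemma in_slot_skips (n : nat) (sk : list bool) (k t : nat) :
  In t (slot_skips n sk k) <-> (t < n)%nat /\ is_skip sk (S (k + t * (n - 1))) = true.
Proof. unfold slot_skips. rewrite filter_In, in_seq. split; intros [H1 H2]; split; auto; lia. Qed.

Lemma not_in_slot_skips (n : nat) (sk : list bool) (k t : nat) :
  (t < n)%nat -> ~ In t (slot_skips n sk k) -> is_skip sk (S (k + t * (n - 1))) = false.
Proof.
  intros Ht Hnot. destruct (is_skip sk (S (k + t * (n - 1)))) eqn:Hskip; [|reflexivity].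
  exfalso. apply Hnot, in_slot_skips. auto.
Qed.

Lemma skips_by_slot (n : nat) (sk : list bool) :
  length (filter (is_skip sk) (seq 1 (n * (n - 1)))) =
  list_sum (map (fun k => length (slot_skips n sk k)) (seq 0 (n - 1))).
Proof.
  rewrite length_filter_as_sum, <- seq_shift, map_map, list_sum_seq_blocks, list_sum_exchange.
  f_equal. apply map_ext. intros k. unfold slot_skips. now rewrite length_filter_as_sum.
Qed.

Section Slots.

Variable n : nat.
Hypothesis n_ge2 : (2 <= n)%nat.
Local Notation p := (Z.of_nat n).
Variable sk : list bool.
Local Notation prefix := (prefix n sk).

Definition carrier (r : nat) : Z := prefix r (Z.of_nat r).

Lemma carrier_succ (r : nat) :
  carrier (S r) = prefix r (if is_skip sk (S r) then Z.of_nat r + 1 else Z.of_nat r).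
Proof. unfold carrier. rewrite Nat2Z.inj_succ. apply prefix_front, n_ge2. Qed.

Lemma carrier_mod_neq (r : nat) : carrier r mod p <> prefix r (Z.of_nat r + 1) mod p.
Proof. unfold carrier. rewrite prefix_mod_eq_iff by exact n_ge2. apply mod_neq_succ, n_ge2. Qed.

Lemma carrier_const (r d : nat) :
  (forall i, (r < i <= r + d)%nat -> is_skip sk i = false) -> carrier (r + d) = carrier r.
Proof.
  induction d as [|d IH]; intros Hd; [now rewrite Nat.add_0_r|].
  rewrite Nat.add_succ_r, carrier_succ, Hd by lia. apply IH. intros i Hi. apply Hd. lia.
Qed.

(* The value held by slot k just before the letter k + t(n-1) + 1. *)
Definition occupant (k t : nat) : Z :=
  prefix (k + t * (n - 1)) (Z.of_nat (k + t * (n - 1)) + 1).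

Lemma occupant_succ (k t : nat) :
  occupant k (S t) =
  (if is_skip sk (S (k + t * (n - 1))) then carrier (k + t * (n - 1)) else occupant k t) + p.
Proof.
  unfold occupant, carrier. set (r := (k + t * (n - 1))%nat).
  replace (k + S t * (n - 1))%nat with (S r + (n - 2))%nat by (unfold r; simpl; lia).
  replace (Z.of_nat (S r + (n - 2)) + 1) with (Z.of_nat r + p) by lia.
  rewrite prefix_stable, prefix_back by lia.
  destruct (is_skip sk (S r)); reflexivity.
Qed.

Lemma occupant_zero (k : nat) : (k < n - 1)%nat -> occupant k 0 = Z.of_nat k + 1.
Proof.
  intros Hk. unfold occupant. rewrite Nat.mul_0_l, Nat.add_0_r.
  change k with (0 + k)%nat at 1. now rewrite prefix_stable by lia.
Qed.

Lemma occupant_at_end (k : nat) :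
  (k < n - 1)%nat ->
  occupant k n = prefix (n * (n - 1)) (Z.of_nat (k + n * (n - 1)) + 1).
Proof.
  intros Hk. unfold occupant.
  replace (k + n * (n - 1))%nat with (n * (n - 1) + k)%nat at 1 by lia.
  now rewrite prefix_stable by lia.
Qed.

Lemma occupant_run (k t d : nat) :
  (forall t', (t <= t' < t + d)%nat -> is_skip sk (S (k + t' * (n - 1))) = false) ->
  occupant k (t + d) = occupant k t + Z.of_nat d * p.
Proof.
  induction d as [|d IH]; intros Hd; [rewrite Nat.add_0_r; lia|].
  rewrite Nat.add_succ_r, occupant_succ, Hd by lia.
  rewrite IH by (intros; apply Hd; lia). lia.
Qed.

Lemma occupant_before_first_skip (k t0 : nat) :
  (k < n - 1)%nat ->
  (forall t, (t < t0)%nat -> is_skip sk (S (k + t * (n - 1))) = false) ->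
  occupant k t0 = Z.of_nat k + 1 + Z.of_nat t0 * p.
Proof.
  intros Hk Hbefore. change t0 with (0 + t0)%nat at 1.
  rewrite occupant_run by (intros; apply Hbefore; lia).
  rewrite occupant_zero by exact Hk. lia.
Qed.

End Slots.

Section Levels.

Variable n : nat.
Hypothesis n_ge2 : (2 <= n)%nat.
Local Notation p := (Z.of_nat n).

Definition weight (v : Z) : Z := v mod p + (p - 1) * (v / p).

Lemma weight_monotone (a b : Z) : a <= b -> weight a <= weight b.
Proof.
  intros Hab. unfold weight.
  pose proof (Z.div_mod a p ltac:(lia)). pose proof (Z.mod_pos_bound a p ltac:(lia)).
  pose proof (Z.div_mod b p ltac:(lia)). pose proof (Z.mod_pos_bound b p ltac:(lia)).
  destruct (Z.lt_total (a / p) (b / p)) as [Hq|[Hq|Hq]]; [nia|rewrite Hq in *; nia|nia].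
Qed.

Lemma weight_lt_inv (a b : Z) : weight a < weight b -> a < b.
Proof.
  intros Hw. destruct (Z_lt_le_dec a b) as [|Hba]; [assumption|].
  apply weight_monotone in Hba. lia.
Qed.

Lemma weight_add_p (v : Z) : weight (v + p) = weight v + (p - 1).
Proof.
  unfold weight. replace (v + p) with (v + 1 * p) by lia.
  rewrite Z.mod_add, Z.div_add by lia. lia.
Qed.

Lemma weight_residue (c q : Z) : 0 <= c < p -> weight (c + q * p) = c + (p - 1) * q.
Proof.
  intros Hc. unfold weight. rewrite Z.mod_add, Z.div_add by lia.
  rewrite Z.mod_small, Z.div_small by lia. lia.
Qed.

Variable sk : list bool.
Local Notation prefix := (prefix n sk).

Definition level (r : nat) (X : Z) : Z := X - weight (prefix r X).

Lemma level_zero (X : Z) : 0 <= X < p -> level 0 X = 0.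
Proof.
  intros HX. unfold level, weight. change (Defs.prefix n sk 0 X) with X.
  rewrite Z.mod_small, Z.div_small by lia. lia.
Qed.

Lemma level_succ_front (r : nat) :
  level (S r) (Z.of_nat r + 1) =
  if is_skip sk (S r) then level r (Z.of_nat r + 1) else level r (Z.of_nat r) + 1.
Proof. unfold level. rewrite prefix_front by exact n_ge2. destruct (is_skip sk (S r)); lia. Qed.

Lemma level_succ_back (r : nat) :
  level (S r) (Z.of_nat r + p) =
  if is_skip sk (S r) then level r (Z.of_nat r) + 1 else level r (Z.of_nat r + 1).
Proof.
  unfold level. rewrite prefix_back, weight_add_p by exact n_ge2.
  destruct (is_skip sk (S r)); lia.
Qed.

Lemma level_succ_middle (r : nat) (X : Z) :
  Z.of_nat r + 2 <= X <= Z.of_nat r + p - 1 -> level (S r) X = level r X.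
Proof. intros HX. unfold level. now rewrite prefix_middle. Qed.

Lemma level_nonneg (r : nat) (X : Z) :
  Z.of_nat r <= X <= Z.of_nat r + p - 1 -> 0 <= level r X.
Proof.
  revert X. induction r as [|r IH]; intros X HX.
  - rewrite level_zero by lia. lia.
  - rewrite Nat2Z.inj_succ in HX.
    destruct (Z.eq_dec X (Z.of_nat r + 1)) as [->|Hfront].
    { rewrite level_succ_front.
      destruct (is_skip sk (S r)); [apply IH; lia|]. specialize (IH (Z.of_nat r)). lia. }
    destruct (Z.eq_dec X (Z.of_nat r + p)) as [->|Hback].
    { rewrite level_succ_back.
      destruct (is_skip sk (S r)); [|apply IH; lia]. specialize (IH (Z.of_nat r)). lia. }
    rewrite level_succ_middle by lia. apply IH. lia.
Qed.

Lemma level_forward_succ (r : nat) (X : Z) :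
  Z.of_nat r <= X <= Z.of_nat r + p - 1 ->
  exists X', Z.of_nat r + 1 <= X' <= Z.of_nat r + p /\
    level r X + (if X =? Z.of_nat r then 1 else 0) <= level (S r) X'.
Proof.
  intros HX. pose proof (level_succ_front r). pose proof (level_succ_back r).
  destruct (Z.eqb_spec X (Z.of_nat r)) as [->|Hr].
  { destruct (is_skip sk (S r));
      [exists (Z.of_nat r + p)|exists (Z.of_nat r + 1)]; split; lia. }
  destruct (Z.eq_dec X (Z.of_nat r + 1)) as [->|Hr1].
  { destruct (is_skip sk (S r));
      [exists (Z.of_nat r + 1)|exists (Z.of_nat r + p)]; split; lia. }
  exists X. rewrite level_succ_middle by lia. split; lia.
Qed.

Lemma level_forward (r d : nat) (X : Z) :
  Z.of_nat r <= X <= Z.of_nat r + p - 1 ->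
  exists X', Z.of_nat (r + d) <= X' <= Z.of_nat (r + d) + p - 1 /\
    level r X <= level (r + d) X'.
Proof.
  intros HX. induction d as [|d IH].
  - exists X. rewrite Nat.add_0_r. split; lia.
  - destruct IH as [X1 [H1 L1]].
    destruct (level_forward_succ (r + d) X1 H1) as [X2 [H2 L2]].
    exists X2. rewrite Nat.add_succ_r, Nat2Z.inj_succ. split; [lia|].
    destruct (_ =? _); lia.
Qed.

Lemma carrier_weight_le (r : nat) : weight (carrier n sk r) <= Z.of_nat r.
Proof. pose proof (level_nonneg r (Z.of_nat r) ltac:(lia)). unfold level, carrier in *. lia. Qed.

End Levels.

Section Cycle.

Variable n : nat.
Hypothesis n_ge2 : (2 <= n)%nat.
Local Notation p := (Z.of_nat n).
Variable sk : list bool.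
Local Notation prefix := (prefix n sk).
Hypothesis word_id : forall X, prefix (n * (n - 1)) X = X.

Lemma level_final (X : Z) :
  Z.of_nat (n * (n - 1)) <= X <= Z.of_nat (n * (n - 1)) + p - 1 ->
  level n sk (n * (n - 1)) X = p - 1.
Proof.
  intros HX. unfold level. rewrite word_id.
  rewrite Nat2Z.inj_mul, Nat2Z.inj_sub in HX by lia.
  replace X with ((X - p * (p - 1)) + (p - 1) * p) at 2 by lia.
  rewrite weight_residue by lia. lia.
Qed.

Lemma carrier_weight_ge (r : nat) :
  (r < n * (n - 1))%nat -> Z.of_nat r + 2 - p <= weight n (carrier n sk r).
Proof.
  intros Hr.
  destruct (level_forward_succ n n_ge2 sk r (Z.of_nat r)) as [X1 [H1 L1]]; [lia|].
  rewrite Z.eqb_refl in L1.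
  destruct (level_forward n n_ge2 sk (S r) (n * (n - 1) - S r) X1) as [X2 [H2 L2]]; [lia|].
  replace (S r + (n * (n - 1) - S r))%nat with (n * (n - 1))%nat in H2, L2 by lia.
  rewrite level_final in L2 by exact H2. unfold level, carrier in *. lia.
Qed.

Lemma occupant_final (k : nat) :
  (k < n - 1)%nat -> occupant n sk k n = Z.of_nat k + 1 + Z.of_nat (n * (n - 1)).
Proof.
  intros Hk. rewrite (occupant_at_end n n_ge2), word_id by exact Hk. lia.
Qed.

Lemma carrier_at_last_skip (k t0 : nat) :
  (k < n - 1)%nat -> (t0 < n)%nat -> is_skip sk (S (k + t0 * (n - 1))) = true ->
  (forall t, (t0 < t < n)%nat -> is_skip sk (S (k + t * (n - 1))) = false) ->
  carrier n sk (k + t0 * (n - 1)) = Z.of_nat k + 1 + (Z.of_nat t0 - 1) * p.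
Proof.
  intros Hk Ht0 Hskip Hafter.
  pose proof (occupant_final k Hk) as Hfinal.
  replace n with (S t0 + (n - S t0))%nat in Hfinal at 2 by lia.
  rewrite (occupant_run n n_ge2) in Hfinal by (intros; apply Hafter; lia).
  rewrite (occupant_succ n n_ge2), Hskip in Hfinal.
  rewrite Nat2Z.inj_mul, !Nat2Z.inj_sub, Nat2Z.inj_succ in Hfinal by lia. nia.
Qed.

Lemma slot_skips_nonempty (k : nat) : (k < n - 1)%nat -> slot_skips n sk k <> [].
Proof.
  intros Hk E.
  assert (Hnone : forall t, (0 <= t < 0 + n)%nat -> is_skip sk (S (k + t * (n - 1))) = false).
  { intros t Ht. apply (not_in_slot_skips n sk k t); [lia|]. rewrite E. tauto. }
  pose proof (occupant_run n n_ge2 sk k 0 n Hnone) as Hrun.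
  rewrite occupant_final, (occupant_zero n n_ge2) in Hrun by exact Hk.
  rewrite Nat2Z.inj_mul, Nat2Z.inj_sub in Hrun by lia. nia.
Qed.

Lemma slot_skips_not_single (k t0 : nat) : (k < n - 1)%nat -> slot_skips n sk k <> [t0].
Proof.
  intros Hk E.
  assert (Ht0 : In t0 (slot_skips n sk k)) by (rewrite E; now left).
  apply in_slot_skips in Ht0. destruct Ht0 as [Ht0 Hskip].
  assert (Hother : forall t, (t < n)%nat -> t <> t0 -> is_skip sk (S (k + t * (n - 1))) = false).
  { intros t Ht Hne. apply (not_in_slot_skips n sk k t); [lia|]. rewrite E. simpl. intuition. }
  pose proof (occupant_before_first_skip n n_ge2 sk k t0 Hk ltac:(intros; apply Hother; lia))
    as Hocc.
  pose proof (carrier_at_last_skip k t0 Hk Ht0 Hskip ltac:(intros; apply Hother; lia)) as Hcar.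
  apply (carrier_mod_neq n n_ge2 sk (k + t0 * (n - 1))).
  fold (occupant n sk k t0). rewrite Hocc, Hcar.
  replace (Z.of_nat k + 1 + Z.of_nat t0 * p)
    with (Z.of_nat k + 1 + (Z.of_nat t0 - 1) * p + 1 * p) by lia.
  now rewrite !Z.mod_add by lia.
Qed.

Lemma slot_skips_ge2 (k : nat) : (k < n - 1)%nat -> (2 <= length (slot_skips n sk k))%nat.
Proof.
  intros Hk. pose proof (slot_skips_nonempty k Hk) as Hnil.
  pose proof (slot_skips_not_single k) as Hsingle.
  destruct (slot_skips n sk k) as [|t0 [|t1 rest]]; simpl.
  - congruence.
  - exfalso. now apply (Hsingle t0).
  - lia.
Qed.

End Cycle.

Section Ascent.

Variable n : nat.
Hypothesis n_ge2 : (2 <= n)%nat.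
Local Notation p := (Z.of_nat n).
Variable sk : list bool.
Hypothesis word_id : forall X, prefix n sk (n * (n - 1)) X = X.
Hypothesis skips_total : length (filter (is_skip sk) (seq 1 (n * (n - 1)))) = (2 * n - 2)%nat.

Lemma slot_skips_two (k : nat) : (k < n - 1)%nat -> length (slot_skips n sk k) = 2%nat.
Proof.
  intros Hk.
  apply (list_sum_tight (fun k => length (slot_skips n sk k)) (seq 0 (n - 1)));
    [| |apply in_seq; lia].
  - intros k' Hk'. apply in_seq in Hk'. apply slot_skips_ge2; auto; lia.
  - rewrite <- skips_by_slot, skips_total, length_seq. lia.
Qed.

Lemma slot_first_or_last (k t0 : nat) :
  (k < n - 1)%nat -> (t0 < n)%nat -> is_skip sk (S (k + t0 * (n - 1))) = true ->
  (forall t, (t < t0)%nat -> is_skip sk (S (k + t * (n - 1))) = false) \/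
  (forall t, (t0 < t < n)%nat -> is_skip sk (S (k + t * (n - 1))) = false).
Proof.
  intros Hk Ht0 Hskip.
  assert (Hnodup : NoDup (slot_skips n sk k)) by apply NoDup_filter, seq_NoDup.
  assert (Hin : forall t, (t < n)%nat -> is_skip sk (S (k + t * (n - 1))) = true ->
                          In t (slot_skips n sk k)).
  { intros t Ht Hs. now apply in_slot_skips. }
  pose proof (slot_skips_two k Hk) as Htwo. pose proof (Hin t0 Ht0 Hskip) as Hin0.
  destruct (slot_skips n sk k) as [|a [|b []]]; try discriminate Htwo.
  apply NoDup_cons_iff in Hnodup. simpl in Hnodup, Hin0.
  destruct (Nat.eq_dec t0 (Nat.max a b)); [right|left];
    intros t Ht; destruct (is_skip sk (S (k + t * (n - 1)))) eqn:Hs; try reflexivity;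
    pose proof (Hin t ltac:(lia) Hs) as Hint; simpl in Hint; lia.
Qed.

Lemma carrier_increases (r : nat) :
  (S r <= n * (n - 1))%nat -> is_skip sk (S r) = true -> carrier n sk r < carrier n sk (S r).
Proof.
  intros Hr Hskip.
  destruct (Nat.eq_dec (S r) (n * (n - 1))) as [Elast|Hlt].
  - (* [carrier_weight_ge] stops before the last letter; there u_(n(n-1)) = e gives both sides. *)
    pose proof (prefix_back n n_ge2 sk r) as Hback. rewrite Hskip, Elast, word_id in Hback.
    unfold carrier. rewrite Elast, word_id. lia.
  - destruct (slot_decomposition n r n_ge2 ltac:(lia)) as [k [t0 [Hk [Ht0 ->]]]].
    rewrite carrier_succ, Hskip by exact n_ge2.
    apply (weight_lt_inv n n_ge2).
    destruct (slot_first_or_last k t0 Hk Ht0 Hskip) as [Hbefore|Hafter].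
    + pose proof (carrier_weight_le n n_ge2 sk (k + t0 * (n - 1))).
      fold (occupant n sk k t0). rewrite occupant_before_first_skip by auto.
      rewrite weight_residue by lia. lia.
    + pose proof (carrier_weight_ge n n_ge2 sk word_id (S (k + t0 * (n - 1))) ltac:(lia)) as Hw.
      rewrite carrier_succ, Hskip in Hw by exact n_ge2.
      rewrite carrier_at_last_skip by auto. rewrite weight_residue by lia. lia.
Qed.

End Ascent.

Section Product.

Variable n : nat.
Hypothesis n_ge2 : (2 <= n)%nat.
Local Notation p := (Z.of_nat n).

Lemma t_at_skip (sk : list bool) (r : nat) (X : Z) :
  is_skip sk (S r) = true ->
  t n sk (S r) X = refl n (carrier n sk r) (carrier n sk (S r)) X.
Proof. intros Hskip. now rewrite t_succ, carrier_succ, Hskip by exact n_ge2. Qed.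

(* u_(j-1) sigma_j = t_j u_(j-1): reinserting the skipped letters moves each t_j to the front. *)
Lemma prefix_nil_factor (sk : list bool) (j : nat) (X : Z) :
  prefix n [] j X = prod (map (t n sk) (filter (is_skip sk) (seq 1 j))) (prefix n sk j X).
Proof.
  revert X. induction j as [|j IH]; intros X; [reflexivity|].
  rewrite prefix_succ, IH, seq_S, filter_app, map_app, prod_app, (prefix_succ n sk).
  unfold letter at 1. rewrite is_skip_nil. simpl. unfold letter.
  destruct (is_skip sk (S j)) eqn:Hskip; simpl; [|reflexivity].
  f_equal. unfold t, comp. simpl. rewrite Nat.sub_0_r. now rewrite prefix_inv_cancel.
Qed.

Lemma carrier_nil (r : nat) : carrier n [] r = 0.
Proof.
  induction r as [|r IH]; [reflexivity|].
  rewrite carrier_succ, is_skip_nil by exact n_ge2. exact IH.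
Qed.

(* Without skips the carrier stays 0 and every slot value gains n per round. *)
Lemma full_word_lambda (X : Z) : prefix n [] (n * (n - 1)) X = lambda n X.
Proof.
  set (N := Z.of_nat (n * (n - 1))).
  assert (HN : N = p * (p - 1)) by (unfold N; rewrite Nat2Z.inj_mul, Nat2Z.inj_sub; lia).
  pose proof (Z.div_mod X p ltac:(lia)). pose proof (Z.mod_pos_bound X p ltac:(lia)).
  replace X with (N + X mod p + (X / p - (p - 1)) * p) at 1 by lia.
  rewrite (prefix_periodic n n_ge2). unfold lambda.
  destruct (Z.eqb_spec (X mod p) 0) as [E|E].
  - rewrite E, Z.add_0_r.
    change (prefix n [] (n * (n - 1)) N) with (carrier n [] (n * (n - 1))).
    rewrite carrier_nil. lia.
  - set (k := Z.to_nat (X mod p - 1)).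
    assert (Hk : (k < n - 1)%nat) by lia.
    assert (Hrun : occupant n [] k (0 + n) = occupant n [] k 0 + p * p).
    { rewrite (occupant_run n n_ge2); [lia|]. intros. apply is_skip_nil. }
    rewrite Nat.add_0_l, (occupant_at_end n n_ge2), (occupant_zero n n_ge2) in Hrun by exact Hk.
    replace (Z.of_nat (k + n * (n - 1)) + 1) with (N + X mod p) in Hrun by lia.
    lia.
Qed.

End Product.

Section Factorization.

Variable n : nat.
Hypothesis n_ge2 : (2 <= n)%nat.
Variable sk : list bool.
Hypothesis word_id : forall X, prefix n sk (n * (n - 1)) X = X.
Hypothesis skips_total : length (filter (is_skip sk) (seq 1 (n * (n - 1)))) = (2 * n - 2)%nat.
Local Notation skips := (filter (is_skip sk) (seq 1 (n * (n - 1)))).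

Lemma skip_position (i : nat) :
  (i < length skips)%nat ->
  exists r, nth i skips 0%nat = S r /\ (S r <= n * (n - 1))%nat /\ is_skip sk (S r) = true.
Proof.
  intros Hi. pose proof (nth_In _ 0%nat Hi) as Hin.
  apply filter_In in Hin. destruct Hin as [Hin Hskip]. apply in_seq in Hin.
  exists (nth i skips 0%nat - 1)%nat.
  replace (S (nth i skips 0%nat - 1)) with (nth i skips 0%nat) by lia. repeat split; auto; lia.
Qed.

Lemma r_u_nth (i : nat) (X : Z) :
  (i < length skips)%nat -> nth i (r_u n sk) (fun y => y) X = t n sk (nth i skips 0%nat) X.
Proof.
  intros Hi. unfold r_u.
  rewrite nth_indep with (d' := t n sk 0%nat) by now rewrite length_map.
  now rewrite map_nth.
Qed.

Lemma r_u_in_fact : in_fact n (r_u n sk).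
Proof.
  unfold in_fact. split; [|split].
  - unfold r_u. now rewrite length_map.
  - apply Forall_forall. intros u Hu. unfold r_u in Hu. apply in_map_iff in Hu.
    destruct Hu as [j [<- Hj]]. apply filter_In in Hj. destruct Hj as [Hj Hskip].
    apply in_seq in Hj. destruct j as [|r]; [lia|].
    exists (carrier n sk r), (carrier n sk (S r)). split.
    + rewrite carrier_succ, Hskip by exact n_ge2. apply carrier_mod_neq, n_ge2.
    + intros X. now apply t_at_skip.
  - intros X. rewrite <- (full_word_lambda n n_ge2), (prefix_nil_factor n n_ge2 sk), word_id.
    reflexivity.
Qed.

Lemma r_u_tree_like : tree_like n (r_u n sk).
Proof.
  split; [exact r_u_in_fact|].
  (* Both a k and b k are the carrier between the k-th and the (k+1)-th skip. *)
  exists (fun k => carrier n sk (nth k skips 0%nat - 1)),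
         (fun k => carrier n sk (nth (k - 1) skips 0%nat)).
  split.
  - intros k Hk. destruct (skip_position (k - 1) ltac:(lia)) as [r [Er [Hr Hskip]]].
    rewrite Er, Nat.sub_succ, Nat.sub_0_r. split; [|split].
    + now apply carrier_increases.
    + rewrite carrier_succ, Hskip by exact n_ge2. apply carrier_mod_neq, n_ge2.
    + intros X. rewrite r_u_nth, Er by lia. now apply t_at_skip.
  - intros k Hk. f_equal.
    destruct (skip_position (k - 1) ltac:(lia)) as [r [Er [_ Hskip]]].
    destruct (filter_seq_consecutive (is_skip sk) 1 (n * (n - 1)) (k - 1) ltac:(lia))
      as [Hlt Hgap].
    replace (S (k - 1)) with k in Hlt, Hgap by lia. rewrite Er in Hlt, Hgap |- *.
    replace (nth k skips 0%nat - 1)%nat with (S r + (nth k skips 0%nat - 1 - S r))%nat by lia.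
    apply (carrier_const n n_ge2 sk). intros i Hi. apply Hgap. lia.
Qed.

End Factorization.

Theorem lemma5p14 (n : nat) (sk : list bool) :
  (2 <= n)%nat -> in_Sn n sk -> tree_like n (r_u n sk).
Proof.
  intros Hn [Hlen [Hcount Hid]].
  assert (Hskips : length (filter (is_skip sk) (seq 1 (n * (n - 1)))) = (2 * n - 2)%nat)
    by now rewrite <- Hlen, skip_count.
  now apply r_u_tree_like.
Qed.
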